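(* For every oriented path $P$, $\mathrm{mad}_{\delta^+}(P)=|V(P)|-1$.
   Context: An oriented path is an orientation of an undirected path. A subdivision of a digraph $F$ is a digraph obtained from $F$ by replacing each arc $(x,y)$ by a directed path from $x$ to $y$ (internally disjoint, new internal vertices). For a digraph $F$, $\mathrm{mad}_{\delta^+}(F)$ is the least integer $c$ such that every digraph $D$ with minimum out-degree $\delta^+(D)\ge c$ contains a subdivision of $F$ as a subdigraph. *)

(* Finite digraphs are given by a finType V and an arc
   relation e : rel V (simple digraphs: no loops; opposite arcs allowed). *)
From mathcomp Require Import all_boot.
Set Implicit Arguments. Unset Strict Implicit. Unset Printing Implicit Defensive.

Definition loopless (V : finType) (e : rel V) : Prop := irreflexive e.

Definition min_outdeg_ge (V : finType) (e : rel V) (c : nat) : Prop :=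
  forall v : V, c <= #|[set w | e v w]|.

(* (V, e) contains a subdivision of the digraph (U, fe) as a subdigraph:
   an injective map f of the vertices of F, and for every arc (x,y) of F
   a directed path in D from f x to f y whose list of internal vertices is
   p x y; internal vertices are new (not images of vertices of F), the
   paths are vertex-simple, and paths of distinct arcs are internally
   disjoint. *)
Definition contains_subdivision (U : finType) (fe : rel U)
    (V : finType) (e : rel V) : Prop :=
  exists (f : U -> V) (p : U -> U -> seq V),
    injective f /\
    (forall x y, fe x y ->
        path e (f x) (rcons (p x y) (f y)) /\ uniq (p x y) /\
        (forall v, v \in p x y -> forall z, v != f z)) /\
    (forall x y x' y', fe x y -> fe x' y' -> (x, y) != (x', y') ->
        forall v, v \in p x y -> v \notin p x' y').

(* The oriented path with vertices 0, ..., size s, where s`_i = true means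
   the arc between i and i+1 is (i, i+1), and false means it is (i+1, i).
   Every oriented path is isomorphic to one of these. *)
Definition opath_arc (s : seq bool) : rel 'I_(size s).+1 :=
  fun i j => ((j == i.+1 :> nat) && nth false s i)
          || ((i == j.+1 :> nat) && ~~ nth false s j).

Definition forces_subdivision (U : finType) (fe : rel U) (c : nat) : Prop :=
  forall (V : finType) (e : rel V), 0 < #|V| -> loopless e ->
    min_outdeg_ge e c -> contains_subdivision fe e.

Definition is_mad_dplus (U : finType) (fe : rel U) (c : nat) : Prop :=
  forces_subdivision fe c /\
  (forall c', forces_subdivision fe c' -> c <= c').

From mathcomp Require Import all_boot zify.
Set Implicit Arguments. Unset Strict Implicit. Unset Printing Implicit Defensive.

(* Let k be the number of arcs of the oriented path P.  We embed P from a vertex w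
   of a vertex set A in which all out-degrees are at least k, by induction on |A|.
   If some vertex reachable from w cannot return to w, the set O of such vertices
   is closed under out-arcs and misses w, so out-degrees in O are still at least k:
   walk from w into O and embed P there.  Otherwise w lies in a sink strong
   component.  Write P as a block of b >= 0 backward arcs, then a forward arc, then
   a rest P'.  A maximal path from w closes a cycle of length > b, from which one
   can return to w; so there is a directed path u -> ... -> w with b arcs, and u
   has an out-neighbour u' off it.  Deleting these b + 1 vertices lowers the
   out-degrees by at most b + 1, so P' embeds from u' in the rest, and the forward
   arc from u absorbs the walk leading to that embedding.  Conversely, a complete
   digraph on fewer than |V(P)| vertices has large minimum out-degree but too few
   vertices. *)

Section FlattenNth.
Variable T : eqType.
Implicit Types (t : seq (seq T)) (x : T).

Lemma mem_flatten_nth t k x : x \in nth [::] t k -> x \in flatten t.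
Proof.
have [lt | ge] := ltnP k (size t); last by rewrite nth_default.
by move=> xk; apply/flattenP; exists (nth [::] t k); rewrite ?mem_nth.
Qed.

Lemma uniq_flatten_nth t k : uniq (flatten t) -> uniq (nth [::] t k).
Proof.
elim: t k => [|l t IH] [|k] //=; rewrite cat_uniq => /and3P[ul _ ut] //.
exact: IH.
Qed.

Lemma flatten_nth_disjoint t n m x : uniq (flatten t) -> n != m ->
  x \in nth [::] t n -> x \notin nth [::] t m.
Proof.
elim: t n m => [|l t IH] [|n] [|m] //=; rewrite cat_uniq => /and3P[_ lt ut] nm.
- by move=> xl; apply: contraL xl => /mem_flatten_nth; apply: (hasPn lt).
- by move=> /mem_flatten_nth; apply: (hasPn lt).
- exact: IH.
Qed.

End FlattenNth.

Section OrientedPathWalks.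
Variables (V : finType) (e : rel V).

Definition arc_dir (d : bool) : rel V := if d then e else fun x y => e y x.

(* [t] lists, arc by arc, the vertices of the subdivided path after the current
   branch vertex up to and including the next one, traversed along [e] for a
   forward arc and against [e] for a backward one.  The branch vertices, images of
   the vertices of [s], are [branch a t i]. *)
Fixpoint opath_walk (a : V) (s : seq bool) (t : seq (seq V)) : bool :=
  match s, t with
  | [::], [::] => true
  | d :: s', l :: t' =>
      [&& l != [::], path (arc_dir d) a l & opath_walk (last a l) s' t']
  | _, _ => false
  end.

Definition branch (a : V) (t : seq (seq V)) (i : nat) : V :=
  last a (flatten (take i t)).

Definition interior (l : seq V) : seq V :=
  if l is x :: l' then belast x l' else [::].

Definition segment (t : seq (seq V)) (x y : nat) : seq V :=
  if y == x.+1 then interior (nth [::] t x)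
  else if x == y.+1 then rev (interior (nth [::] t y)) else [::].

Lemma opath_walk_size a s t : opath_walk a s t -> size t = size s.
Proof. by elim: s a t => [|d s IH] a [|l t] //= /and3P[_ _ /IH ->]. Qed.

Lemma opath_walk_cat a s1 s2 t1 t2 : size t1 = size s1 ->
  opath_walk a (s1 ++ s2) (t1 ++ t2) =
  opath_walk a s1 t1 && opath_walk (last a (flatten t1)) s2 t2.
Proof.
elim: s1 a t1 => [|d s1 IH] a [|l t1] //= [sz].
by rewrite IH // last_cat !andbA.
Qed.

Lemma opath_walk_backward a cs :
  opath_walk a (nseq (size cs) false) [seq [:: c] | c <- cs] =
  path (arc_dir false) a cs.
Proof. by elim: cs a => [|c cs IH] a //=; rewrite IH andbT. Qed.

Lemma branch0 a t : branch a t 0 = a.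
Proof. by rewrite /branch take0. Qed.

Lemma branch_cons a l t i : branch a (l :: t) i.+1 = branch (last a l) t i.
Proof. by rewrite /branch /= last_cat. Qed.

Lemma branchS a t i : i < size t ->
  branch a t i.+1 = last (branch a t i) (nth [::] t i).
Proof.
by move=> lt; rewrite /branch (take_nth [::] lt) flatten_rcons last_cat.
Qed.

Lemma opath_walk_nth a s t i : opath_walk a s t -> i < size t ->
  nth [::] t i != [::] /\
  path (arc_dir (nth false s i)) (branch a t i) (nth [::] t i).
Proof.
elim: i a s t => [|i IH] a [|d s] [|l t] //= /and3P[l0 pl w] lt //.
by rewrite branch_cons; apply: IH.
Qed.

Lemma interior_rcons a l : l != [::] -> rcons (interior l) (last a l) = l.
Proof. by case: l => // x l _; rewrite /= -lastI. Qed.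

Lemma mem_interior l v : v \in interior l -> v \in l.
Proof. by case: l => //= x l /mem_belast. Qed.

Lemma interior_uniq a l :
  uniq l -> uniq (interior l) /\ last a l \notin interior l.
Proof.
case: l => // x l u /=.
have : uniq (rcons (belast x l) (last x l)) by rewrite -lastI.
by rewrite rcons_uniq => /andP[].
Qed.

Section Subdivision.
Variables (a : V) (s : seq bool) (t : seq (seq V)).
Hypotheses (walk : opath_walk a s t) (ut : uniq (a :: flatten t)).

Let size_t : size t = size s := opath_walk_size walk.
Let uflat : uniq (flatten t) := (andP ut).2.
Let a_notin : a \notin flatten t := (andP ut).1.

Lemma branch_in_segment i : i < size s -> branch a t i.+1 \in nth [::] t i.
Proof.
rewrite -size_t => lt; have [l0 _] := opath_walk_nth walk lt.
by rewrite branchS //; case: (nth [::] t i) l0 => // x l _ /=; apply: mem_last.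
Qed.

Lemma branch_inj i j : i <= size s -> j <= size s ->
  branch a t i = branch a t j -> i = j.
Proof.
have branch_flat k : k < size s -> branch a t k.+1 \in flatten t.
  by move=> /branch_in_segment /mem_flatten_nth.
case: i j => [|i] [|j] //= li lj; rewrite ?branch0 => eqij.
- by move: a_notin; rewrite eqij branch_flat.
- by move: a_notin; rewrite -eqij branch_flat.
congr _.+1; apply/eqP; apply: contraTT (branch_in_segment lj) => ij.
by rewrite -eqij (flatten_nth_disjoint uflat ij (branch_in_segment li)).
Qed.

Lemma interior_not_branch n v z : n < size s -> z <= size s ->
  v \in interior (nth [::] t n) -> v != branch a t z.
Proof.
move=> ln lz vi; have vn := mem_interior vi.
case: z lz => [|z] lz.
  by rewrite branch0; apply: contraNneq a_notin => <-; apply: mem_flatten_nth vn.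
have [-> | nz] := eqVneq z n.
  have [_] := interior_uniq (branch a t n) (uniq_flatten_nth n uflat).
  by rewrite -branchS ?size_t //; apply: contraNneq => <-.
apply: contraTneq (branch_in_segment lz) => <-.
by apply: (flatten_nth_disjoint uflat _ vn); rewrite eq_sym.
Qed.

Lemma opath_arcE (x y : 'I_(size s).+1) : opath_arc x y ->
  exists2 n, n < size s &
    (val x, val y) = if nth false s n then (n, n.+1) else (n.+1, n).
Proof.
case/orP=> /andP[/eqP exy sn].
- by exists x; [move: (ltn_ord y); rewrite exy | rewrite sn /= exy].
- by exists y; [move: (ltn_ord x); rewrite exy | rewrite (negPf sn) /= exy].
Qed.

Lemma arc_segment (x y : 'I_(size s).+1) n : n < size s ->
  (val x, val y) = (if nth false s n then (n, n.+1) else (n.+1, n)) ->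
  [/\ path e (branch a t x) (rcons (segment t x y) (branch a t y)),
      uniq (segment t x y) & {subset segment t x y <= interior (nth [::] t n)}].
Proof.
move=> ln; have ln' : n < size t by rewrite size_t.
have [l0 pl] := opath_walk_nth walk ln'.
have [ui _] := interior_uniq a (uniq_flatten_nth n uflat).
have bl : belast (branch a t n) (nth [::] t n) =
          branch a t n :: interior (nth [::] t n) by case: (nth [::] t n) l0.
rewrite /segment; case: (nth false s n) pl => /= pl [-> ->].
- by rewrite eqxx branchS // (interior_rcons _ l0); split.
- rewrite eqxx (ltn_eqF (leqnSn n.+1)) rev_uniq branchS //; split=> // [|v].
    by rewrite -rev_cons -bl rev_path.
  by rewrite mem_rev.
Qed.

Lemma opath_walk_subdivision : contains_subdivision (@opath_arc s) e.
Proof.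
exists (fun i : 'I_(size s).+1 => branch a t i).
exists (fun i j : 'I_(size s).+1 => segment t i j); split; [|split].
- by move=> i j /branch_inj eqij; apply/val_inj/eqij; rewrite -ltnS.
- move=> x y /opath_arcE[n ln exy]; have [pxy uxy sub] := arc_segment ln exy.
  split=> //; split=> // v /sub vi z.
  by apply: (interior_not_branch ln _ vi); rewrite -ltnS.
- move=> x y x' y' /opath_arcE[n ln exy] /opath_arcE[n' ln' exy'] neq v.
  have [_ _ sub] := arc_segment ln exy; have [_ _ sub'] := arc_segment ln' exy'.
  have nn' : n != n'.
    apply: contraNneq neq => eqn; rewrite -eqn -exy in exy'.
    by case: exy' => ex ey; rewrite (val_inj ex) (val_inj ey).
  move=> /sub /mem_interior vn; apply: contra (flatten_nth_disjoint uflat nn' vn).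
  by move=> /sub' /mem_interior.
Qed.

End Subdivision.
End OrientedPathWalks.

Section Construction.
Variables (V : finType) (e : rel V).
Hypothesis e_irr : irreflexive e.

Definition induced (A : {set V}) : rel V :=
  [rel x y | [&& x \in A, y \in A & e x y]].

Definition outdeg (A : {set V}) (x : V) : nat := #|[set y in A | e x y]|.

Definition min_outdeg_in (A : {set V}) (k : nat) : Prop :=
  forall x, x \in A -> k <= outdeg A x.

Lemma induced_path (A : {set V}) x p : x \in A ->
  path (induced A) x p = path e x p && all [in A] p.
Proof.
elim: p x => [|y p IH] x xA //=; rewrite {1}/induced /= xA /=.
by case yA: (y \in A); rewrite ?andbF //= IH // andbA.
Qed.

Lemma outdeg_setD (A B : {set V}) x :
  outdeg A x <= outdeg (A :\: B) x + #|B :\ x|.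
Proof.
rewrite /outdeg; apply: leq_trans (leq_card_setU _ _).
apply: subset_leq_card; apply/subsetP => y; rewrite !inE => /andP[yA exy].
rewrite yA exy andbT; case: (y \in B); rewrite ?orbT //= andbT.
by apply: contraTneq exy => ->; rewrite e_irr.
Qed.

Lemma min_outdeg_setD (A B : {set V}) k :
  min_outdeg_in A (k + #|B|) -> min_outdeg_in (A :\: B) k.
Proof.
move=> deg x /setDP[xA _]; rewrite -(leq_add2r #|B|).
apply: leq_trans (deg x xA) (leq_trans (outdeg_setD A B x) _).
by rewrite leq_add2l subset_leq_card ?subsetDl.
Qed.

Lemma outdeg_out_closed (A B : {set V}) x : B \subset A ->
  (forall y z, y \in B -> z \in A -> e y z -> z \in B) ->
  x \in B -> outdeg B x = outdeg A x.
Proof.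
move=> BA closed xB; apply: eq_card => y; rewrite !inE.
case exy: (e x y); rewrite ?andbF ?andbT //.
by apply/idP/idP => [/(subsetP BA) // | yA]; apply: closed xB yA exy.
Qed.

Lemma maximal_path (A : {set V}) w q : w \in A ->
  path e w q -> uniq (w :: q) -> all [in A] q -> exists q',
  [/\ path e w q', uniq (w :: q'), all [in A] q' &
      forall y, y \in A -> e (last w q') y -> y \in w :: q'].
Proof.
move=> wA; have [n] := ubnP (#|A| - size q).
elim: n q => // n IH q ltm pq uq qA.
case: (pickP [pred y in A | e (last w q) y && (y \notin w :: q)]) => [y | none].
  case/and3P=> yA ey yq.
  have uqy : uniq (w :: rcons q y) by rewrite -rcons_cons rcons_uniq yq.
  have qyA : all [in A] (w :: rcons q y) by rewrite /= all_rcons wA yA.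
  have: size (w :: rcons q y) <= #|A|.
    by rewrite -(card_uniqP uqy); apply/subset_leq_card/subsetP/allP.
  rewrite /= size_rcons => ltA; apply: (IH (rcons q y)) => //.
  - by rewrite size_rcons; lia.
  - by rewrite rcons_path pq.
  - by case/andP: qyA.
exists q; split=> // y yA ey; apply: contraT => yq.
by have := none y; rewrite /= yA ey yq.
Qed.

Lemma long_cycle (A : {set V}) b x : 0 < b -> x \in A -> min_outdeg_in A b ->
  exists C, [/\ cycle e C, uniq C, b < size C & {subset C <= A}].
Proof.
move=> b0 xA deg.
have [q [pq uq /allP qA maxq]] := maximal_path (q := [::]) xA isT isT isT.
set Q := x :: q; set z := last x q.
have QA : {subset Q <= A} by move=> y; rewrite inE => /predU1P[-> | /qA].
have zA : z \in A by apply/QA/mem_last.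
have /card_gt0P[y0 y0N] : 0 < outdeg A z by apply: leq_trans b0 (deg z zA).
have hasQ : has (e z) Q.
  by move: y0N; rewrite inE => /andP[y0A ez0]; apply/hasP; exists y0; rewrite ?maxq.
set j := find (e z) Q; have ltj : j < size Q by rewrite -has_find.
set C := drop j Q.
have lastC : last (nth x Q j) (drop j.+1 Q) = z.
  have : last x Q = last x (take j Q ++ C) by rewrite cat_take_drop.
  by rewrite last_cat /C (drop_nth x ltj).
have zC : z \in C by rewrite /C (drop_nth x ltj) -lastC mem_last.
have nbrC : {subset [set y in A | e z y] <= [predD1 C & z]}.
  move=> y; rewrite !inE => /andP[yA ezy]; rewrite andbC.
  apply/andP; split; last by apply: contraTneq ezy => ->; rewrite e_irr.
  move: (maxq y yA ezy); rewrite -[_ :: _]/Q -(cat_take_drop j Q) mem_cat.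
  case/orP=> // yj; suff: has (e z) (take j Q) by rewrite has_take // ltnn.
  by apply/hasP; exists y.
exists C; split.
- rewrite /C (drop_nth x ltj) /= rcons_path lastC nth_find // andbT.
  have : sorted e (take j Q ++ C) by rewrite cat_take_drop.
  by case/cat_sorted2=> _; rewrite /C (drop_nth x ltj).
- exact: drop_uniq.
- rewrite -(card_uniqP (drop_uniq j uq)) (cardD1 z) zC add1n ltnS.
  by apply: leq_trans (deg z zA) _; apply/subset_leq_card/subsetP => y /nbrC.
- by move=> y /mem_drop /QA.
Qed.

Lemma last_visit (C : seq V) x p : x \in C -> path e x p ->
  exists y pre post, [/\ y \in C, path e y post, last y post = last x p,
                         ~~ has [in C] post & p = pre ++ post].
Proof.
elim/last_ind: p => [|p z IH] xC; first by exists x, [::], [::].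
rewrite rcons_path => /andP[pp ez]; case zC: (z \in C).
  by exists z, (rcons p z), [::]; rewrite cats0 last_rcons.
have [y [pre [post [yC py ly npost ->]]]] := IH xC pp.
exists y, pre, (rcons post z); rewrite rcons_path py ly ez !last_rcons.
by rewrite has_rcons zC rcons_cat.
Qed.

Lemma cycle_path_cat C x p : cycle e C -> uniq C -> x \in C -> path e x p ->
  uniq p -> exists L, [/\ sorted e L, uniq L, last x L = last x p,
                         size C <= size L & {subset L <= C ++ p}].
Proof.
move=> cC uC xC px up.
have [y [pre [post [yC py ly npost ep]]]] := last_visit xC px.
have upost : uniq post by move: up; rewrite ep cat_uniq => /and3P[].
case/splitPr: yC cC uC npost => C1 C2 cC uC npost.
have perm : perm_eq (rcons (C2 ++ C1) y ++ post) ((C1 ++ y :: C2) ++ post).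
  by rewrite perm_cat2r perm_rcons -cat_cons perm_catC.
exists (rcons (C2 ++ C1) y ++ post); split.
- rewrite cat_rcons sorted_cat_cons py andbT.
  by move: cC; rewrite cycle_catC /= => /path_sorted.
- by rewrite (perm_uniq perm) cat_uniq uC upost npost.
- by rewrite last_cat last_rcons ly.
- by rewrite (perm_size perm) size_cat leq_addr.
- move=> v; rewrite (perm_mem perm) !mem_cat => /orP[-> // | vpost].
  by rewrite ep mem_cat vpost !orbT.
Qed.

Lemma sorted_backward_suffix L x w b : sorted e L -> uniq L -> last x L = w ->
  b < size L -> exists cs, [/\ size cs = b, path (arc_dir e false) w cs,
                               uniq (w :: cs) & {subset cs <= L}].
Proof.
move=> sL uL lL ltb; set k := size L - b.+1.
have : size (drop k L) = b.+1 by rewrite size_drop /k subKn.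
have sD : sorted e (drop k L).
  have : sorted e (take k L ++ drop k L) by rewrite cat_take_drop.
  by case/cat_sorted2.
have lD : last w (drop k L) = w.
  have : last x (take k L ++ drop k L) = w by rewrite cat_take_drop.
  by rewrite last_cat; case: (drop k L).
have uD : uniq (drop k L) by apply: drop_uniq.
have DL : {subset drop k L <= L} by move=> v /mem_drop.
case: (drop k L) sD lD uD DL => // y p /= py lp uyp yL [szp].
exists (rev (belast y p)); split.
- by rewrite size_rev size_belast.
- by rewrite -lp rev_path.
- have : uniq (rcons (belast y p) (last y p)) by rewrite -lastI.
  by rewrite rcons_uniq lp /= mem_rev rev_uniq.
- by move=> v; rewrite mem_rev => /mem_belast /yL.
Qed.

Definition in_sink_component (A : {set V}) (w : V) : Prop :=
  forall y, y \in A -> connect (induced A) w y -> connect (induced A) y w.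

Lemma sink_backward_path (A : {set V}) w b : w \in A -> min_outdeg_in A b ->
  in_sink_component A w -> exists cs, [/\ size cs = b,
    path (arc_dir e false) w cs, uniq (w :: cs) & {subset cs <= A}].
Proof.
move=> wA deg sink; case: b deg => [|b] deg; first by exists [::].
set R := [set y in A | connect (induced A) w y].
have RA : R \subset A by apply/subsetP => y; rewrite inE => /andP[].
have wR : w \in R by rewrite inE wA connect0.
have closedR y z : y \in R -> z \in A -> e y z -> z \in R.
  rewrite !inE => /andP[yA wy] zA eyz; rewrite zA.
  by apply: connect_trans wy (connect1 _); rewrite /induced /= yA zA.
have degR : min_outdeg_in R b.+1.
  by move=> y yR; rewrite (outdeg_out_closed RA closedR yR); apply/deg/(subsetP RA).
have [C [cC uC szC CR]] := long_cycle (ltn0Sn b) wR degR.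
have [x xC] : exists x, x \in C.
  by case: C szC {cC uC CR} => // x C _; exists x; rewrite mem_head.
have xA : x \in A by apply/(subsetP RA)/CR.
have /connectP[p px ->] : connect (induced A) x w.
  by move: (CR x xC); rewrite inE => /andP[_ /(sink x xA)].
case/shortenP: px => q pq uq qp; rewrite induced_path // in pq.
case/andP: pq => pq /allP qA; case/andP: uq => _ uq.
have [L [sL uL lL szL LCq]] := cycle_path_cat cC uC xC pq uq.
have [cs [szcs pcs ucs csL]] := sorted_backward_suffix sL uL lL (leq_trans szC szL).
exists cs; split=> // v /csL /LCq; rewrite mem_cat => /orP[/CR | /qA //].
exact: (subsetP RA).
Qed.

(* The lead-in path [l] lets the recursion start anywhere reachable from [w]; a
   forward arc entering [w] absorbs it. *)
Definition embeds_from (A : {set V}) (w : V) (s : seq bool) : Prop :=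
  exists l t, [/\ path e w l, opath_walk e (last w l) s t,
                  uniq (w :: l ++ flatten t) & {subset w :: l ++ flatten t <= A}].

Lemma embeds_backward (A : {set V}) w cs : path (arc_dir e false) w cs ->
  uniq (w :: cs) -> {subset w :: cs <= A} ->
  embeds_from A w (nseq (size cs) false).
Proof.
move=> pcs ucs csA; exists [::], [seq [:: c] | c <- cs].
by rewrite opath_walk_backward /= flatten_seq1.
Qed.

Lemma embeds_backward_forward (A : {set V}) w cs u s :
  path (arc_dir e false) w cs -> uniq (w :: cs) -> {subset w :: cs <= A} ->
  e (last w cs) u -> embeds_from (A :\: [set x in w :: cs]) u s ->
  embeds_from A w (nseq (size cs) false ++ true :: s).
Proof.
move=> pcs ucs csA eu [l [t [pl wt ul lA]]].
exists [::], ([seq [:: c] | c <- cs] ++ (u :: l) :: t).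
have -> : flatten ([seq [:: c] | c <- cs] ++ (u :: l) :: t) =
          cs ++ u :: l ++ flatten t by rewrite flatten_cat flatten_seq1.
rewrite cat0s -cat_cons; split=> //.
- rewrite opath_walk_cat ?size_map ?size_nseq // opath_walk_backward.
  by rewrite pcs flatten_seq1 /= eu pl.
- rewrite cat_uniq ucs ul andbT; apply/hasPn => v /lA.
  by rewrite !inE => /andP[].
- by move=> v; rewrite mem_cat => /orP[/csA // | /lA]; rewrite inE => /andP[].
Qed.

Lemma embeds_prefix (A B : {set V}) w pre x s : path e w (rcons pre x) ->
  uniq (w :: pre) -> {subset w :: pre <= A} -> ~~ has [in B] (w :: pre) ->
  B \subset A -> embeds_from B x s -> embeds_from A w s.
Proof.
move=> px upre preA npre BA [l [t [pl wt ul lB]]].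
exists (rcons pre x ++ l), t; rewrite cat_path px last_cat last_rcons.
have -> : w :: (rcons pre x ++ l) ++ flatten t = (w :: pre) ++ x :: l ++ flatten t.
  by rewrite cat_rcons -catA.
split=> //.
- rewrite cat_uniq upre ul andbT; apply/hasPn => v /lB vB.
  by apply: contraNN npre => vpre; apply/hasP; exists v.
- by move=> v; rewrite mem_cat => /orP[/preA // | /lB /(subsetP BA)].
Qed.

Definition embeds_below (n : nat) : Prop :=
  forall (B : {set V}) x s, #|B| < n -> x \in B ->
    min_outdeg_in B (size s) -> embeds_from B x s.

Lemma embeds_escape (A : {set V}) w x s : embeds_below #|A| -> w \in A ->
  min_outdeg_in A (size s) -> x \in A -> connect (induced A) w x ->
  ~~ connect (induced A) x w -> embeds_from A w s.
Proof.
move=> IH wA deg xA wx xw.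
set O := [set y in A | connect (induced A) w y && ~~ connect (induced A) y w].
have OA : O \subset A by apply/subsetP => y; rewrite inE => /andP[].
have wO : w \notin O by rewrite inE connect0 andbF.
have closedO y z : y \in O -> z \in A -> e y z -> z \in O.
  rewrite !inE => /and3P[yA wy yw] zA eyz.
  have yz : connect (induced A) y z by apply: connect1; rewrite /induced /= yA zA.
  by rewrite zA (connect_trans wy yz); apply: contra yw; apply: connect_trans.
have degO : min_outdeg_in O (size s).
  by move=> y yO; rewrite (outdeg_out_closed OA closedO yO); apply/deg/(subsetP OA).
have ltO : #|O| < #|A| by apply: proper_card; apply/properP; split=> //; exists w.
have : x \in O by rewrite inE xA wx.
case/connectP: wx => p + ->; case/shortenP=> q pq uq _ qO.
have hasO : has [in O] q.
  case/predU1P: (mem_last w q) => [qw | ?]; first by move: wO; rewrite -qw qO.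
  by apply/hasP; exists (last w q).
case: (split_find hasO) pq uq => y pre post yO npre.
rewrite -cat_cons cat_uniq cat_path induced_path //.
case/andP=> /andP[pre_path preA] _ /andP[upre _].
apply: embeds_prefix pre_path _ _ _ OA (IH O y s ltO yO degO).
- by move: upre; rewrite -rcons_cons rcons_uniq => /andP[].
- move=> v; rewrite inE => /predU1P[-> // | vpre].
  by apply: (allP preA); rewrite mem_rcons inE vpre orbT.
- by rewrite /= negb_or wO.
Qed.

Lemma out_neighbor_setD (A B : {set V}) u : #|B :\ u| < outdeg A u ->
  exists2 v, v \in A :\: B & e u v.
Proof.
move=> lt; have : 0 < outdeg (A :\: B) u.
  by rewrite -(ltn_add2r #|B :\ u|) add0n (leq_trans lt (outdeg_setD A B u)).
by case/card_gt0P=> v; rewrite inE => /andP[]; exists v.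
Qed.

Lemma backward_block (s : seq bool) :
  exists b r, s = nseq b false ++ r /\ head true r.
Proof.
elim: s => [|[] s [b [r [-> hr]]]]; first by exists 0, [::].
- by exists 0, (true :: nseq b false ++ r).
- by exists b.+1, r.
Qed.

(* A backward arc cannot absorb a lead-in path, so a whole block of backward arcs
   is embedded at once before recursing. *)
Lemma embeds_sink (A : {set V}) w s : embeds_below #|A| -> w \in A ->
  min_outdeg_in A (size s) -> in_sink_component A w -> embeds_from A w s.
Proof.
move=> IH wA deg sink; have [b [r [sE hr]]] := backward_block s.
have size_s : size s = b + size r by rewrite sE size_cat size_nseq.
have degb : min_outdeg_in A b.
  by move=> y /deg; apply: leq_trans; rewrite size_s leq_addr.
have [cs [szcs pcs ucs csA]] := sink_backward_path wA degb sink.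
have wcsA : {subset w :: cs <= A} by move=> v; rewrite inE => /predU1P[-> | /csA].
rewrite sE -szcs; case: r hr sE size_s => [_ _ _ | [] // r _ sE size_s].
  by rewrite cats0; apply: embeds_backward.
set B := [set x in w :: cs].
have cardB : #|B| = b.+1 by rewrite cardsE (card_uniqP ucs) /= szcs.
have [u uAB eu] : exists2 u, u \in A :\: B & e (last w cs) u.
  have uB : last w cs \in B by rewrite inE mem_last.
  have cardBu : #|B :\ last w cs| = b.
    by move: cardB; rewrite (cardsD1 (last w cs)) uB => -[].
  apply: out_neighbor_setD; apply: leq_trans (deg _ (wcsA _ (mem_last w cs))).
  by rewrite cardBu size_s addnS ltnS leq_addr.
apply: embeds_backward_forward pcs ucs wcsA eu (IH _ _ _ _ uAB _).
- apply/proper_card/properP; split; first exact: subsetDl.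
  by exists w; rewrite // !inE eqxx.
- apply: min_outdeg_setD; rewrite cardB => y /deg.
  by rewrite size_s /= !addnS addnC.
Qed.

Lemma embeds_min_outdeg (A : {set V}) w s : w \in A ->
  min_outdeg_in A (size s) -> embeds_from A w s.
Proof.
have [n] := ubnP #|A|; elim: n A w s => // n IH A w s ltA wA deg.
have below : embeds_below #|A|.
  by move=> B x r ltB; apply: IH; apply: leq_trans ltB _.
case: (pickP [pred x in A | connect (induced A) w x && ~~ connect (induced A) x w]).
  by move=> x /and3P[xA wx xw]; apply: embeds_escape below wA deg xA wx xw.
move=> none; apply: embeds_sink below wA deg _ => y yA wy.
by apply: contraFT (none y) => yw; rewrite /= yA wy yw.
Qed.

End Construction.

Lemma forces_subdivision_opath (s : seq bool) :
  forces_subdivision (@opath_arc s) (size s).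
Proof.
move=> V e /card_gt0P[w _] e_irr deg.
have degT : min_outdeg_in e [set: V] (size s).
  move=> x _; apply: leq_trans (deg x) _.
  by apply/subset_leq_card/subsetP => y; rewrite !inE.
have [l [t [_ wt ut _]]] := embeds_min_outdeg e_irr (in_setT w) degT.
apply: (opath_walk_subdivision wt); move: ut; rewrite -cat_cons cat_uniq.
case/and3P=> _ disj uflat; rewrite /= uflat andbT.
by apply: contra disj => lt; apply/hasP; exists (last w l); rewrite ?mem_last.
Qed.

Lemma subdivision_card_le (U V : finType) (fe : rel U) (e : rel V) :
  contains_subdivision fe e -> #|U| <= #|V|.
Proof. by case=> f [p [f_inj _]]; apply: leq_card f_inj. Qed.

Lemma forces_subdivision_opath_leq (s : seq bool) c :
  forces_subdivision (@opath_arc s) c -> size s <= c.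
Proof.
move=> forced; pose K (x y : 'I_c.+1) := x != y.
have K_irr : irreflexive K by move=> x; rewrite /K eqxx.
have K_deg : min_outdeg_ge K c.
  move=> x; rewrite (_ : [set y | K x y] = [set~ x]) ?cardsC1 ?card_ord //.
  by apply/setP => y; rewrite !inE eq_sym.
have K_nonempty : 0 < #|'I_c.+1| by rewrite card_ord.
have := subdivision_card_le (forced _ K K_nonempty K_irr K_deg).
by rewrite !card_ord.
Qed.

Theorem corollary20 (s : seq bool) :
  is_mad_dplus (@opath_arc s) (size s).
Proof.
split; first exact: forces_subdivision_opath.
by move=> c; apply: forces_subdivision_opath_leq.
Qed.
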